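(* Let $\delta\in(0,1]$, $p\in[0,1]$ and $n\in\mathbb{N}$ with $p\ge\frac{16\ln(2/\delta)}{n}$, and let $$\varepsilon=\log\left(1+\frac{\sqrt{64\log(4/\delta)}}{\sqrt{pn}}+\frac{8}{pn}\right).$$ Let $C\sim\mathrm{Bin}(n-1,p)$ and, conditionally on $C$, $A\sim\mathrm{Bin}(C,1/2)$. Let $P=(A+1,C-A)$ and $Q=(A,C-A+1)$. Then $$\Pr_{z\sim P}\left(-\varepsilon\le\ln\frac{\Pr(P=z)}{\Pr(Q=z)}\le\varepsilon\right)\ge1-\delta\quad\text{and}\quad\Pr_{z\sim Q}\left(-\varepsilon\le\ln\frac{\Pr(P=z)}{\Pr(Q=z)}\le\varepsilon\right)\ge1-\delta.$$ In particular, $P$ and $Q$ are $(\varepsilon,\delta)$-indistinguishable.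
   Context: Two random variables $P,Q$ on the same space are $(\varepsilon,\delta)$-indistinguishable if for every event $E$, $e^{-\varepsilon}(\Pr(Q\in E)-\delta)\le\Pr(P\in E)\le e^{\varepsilon}\Pr(Q\in E)+\delta$. $\mathrm{Bin}(m,p)$ is the binomial distribution. *)

From mathcomp Require Import all_boot all_order all_algebra.
From mathcomp Require Import all_classical all_reals all_analysis.
Set Implicit Arguments. Unset Strict Implicit. Unset Printing Implicit Defensive.
Import Order.TTheory GRing.Theory Num.Theory.
Local Open Scope ring_scope.

(* Joint law of (C, A): C ~ Bin(m, p), A | C ~ Bin(C, 1/2).
   joint m p c a = Pr(C = c, A = a). *)
Definition joint {R : realType} (m : nat) (p : R) (c a : nat) : R :=
  ('C(m, c))%:R * p ^+ c * (1 - p) ^+ (m - c) * ('C(c, a))%:R / 2 ^+ c.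

Definition PrP {R : realType} (m : nat) (p : R) (E : pred (nat * nat)) : R :=
  \sum_(0 <= c < m.+1) \sum_(0 <= a < c.+1)
     joint m p c a * (if E (a.+1, c - a)%N then 1 else 0).

Definition PrQ {R : realType} (m : nat) (p : R) (E : pred (nat * nat)) : R :=
  \sum_(0 <= c < m.+1) \sum_(0 <= a < c.+1)
     joint m p c a * (if E (a, (c - a).+1)%N then 1 else 0).

Definition pmfP {R : realType} (m : nat) (p : R) (z : nat * nat) : R :=
  PrP m p (pred1 z).
Definition pmfQ {R : realType} (m : nat) (p : R) (z : nat * nat) : R :=
  PrQ m p (pred1 z).

(* the event -eps <= ln(Pr(P=z)/Pr(Q=z)) <= eps; the log-ratio is only
   a finite real number when both masses are positive *)
Definition good_event {R : realType} (m : nat) (p eps : R) : pred (nat * nat) :=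
  fun z => [&& 0 < pmfP m p z, 0 < pmfQ m p z &
              - eps <= ln (pmfP m p z / pmfQ m p z) <= eps].

Definition indist {R : realType} (m : nat) (p eps delta : R) : Prop :=
  forall E : pred (nat * nat),
    expR (- eps) * (PrQ m p E - delta) <= PrP m p E /\
    PrP m p E <= expR eps * PrQ m p E + delta.

From mathcomp Require Import all_boot all_order all_algebra.
From mathcomp Require Import all_classical all_reals all_analysis.
From mathcomp Require Import lra zify ring.
Import Order.TTheory GRing.Theory Num.Theory.
Local Open Scope ring_scope.

(* Write B = C - A and r = exp eps.  At a support point z = (k + 1, c - k) of P
   the masses are Pr(C = c, A = k) and Pr(C = c, A = k + 1), whose ratio is
   (k + 1)/(c - k); so z is good iff k + 1 <= r (c - k) and c - k <= r (k + 1).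
   - Symmetry: (A, B) is exchangeable, so Q is P with its coordinates swapped
     and the good event is swap-invariant.  The statement for Q and the lower
     half of indistinguishability thus follow from the statements for P.
   - Chernoff bound: the bad-event indicator is dominated by exponentials whose
     mean is computed from E[x^A y^B] = (1 - p + p (x + y)/2)^(n-1).
   - Estimates (section Estimates): for lam = sqrt(ln(4/delta)/(pn))/2 this
     exponential moment is at most delta, via a rational inequality in 2 lam.
   Indistinguishability follows by splitting an event along the good event,
   on which Pr(P = z) <= r Pr(Q = z). *)

Section Estimates.
Variable R : realType.
Implicit Types (s u v x : R).

Lemma ln_ratio_bounds (x y r : R) : 0 < x -> 0 < y -> 0 < r ->
  (- ln r <= ln (x / y) <= ln r) = (x <= r * y) && (y <= r * x).
Proof.
move=> x0 y0 r0.
rewrite -lnV ?posrE // !ler_ln ?posrE ?invr_gt0 ?divr_gt0 //.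
by rewrite ler_pdivlMr // ler_pdivrMr // ler_pdivrMl // andbC.
Qed.

Lemma expR_le_inv x : x < 1 -> expR x <= (1 - x)^-1.
Proof.
move=> x1; have := expR_ge1Dx (- x); rewrite expRN => h.
by rewrite -[expR x]invrK lef_pV2 ?posrE ?invr_gt0 ?expR_gt0 ?subr_gt0.
Qed.

(* From exp(x) = exp(x/2)^2 >= (1 + x/2)^2. *)
Lemma expRN_le_inv_sq x : 0 <= x -> expR (- x) <= ((1 + x / 2) ^+ 2)^-1.
Proof.
move=> x0; have x20 : 0 <= 1 + x / 2 by lra.
have sq : (1 + x / 2) ^+ 2 <= expR x.
  have -> : expR x = expR (x / 2) ^+ 2 by rewrite -expRM_natl; congr expR; field.
  by rewrite lerXn2r ?nnegrE ?expR_ge0 ?expR_ge1Dx.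
by rewrite expRN lef_pV2 ?posrE ?expR_gt0 ?exprn_gt0 //; lra.
Qed.

Lemma pow_le_expR (k : nat) v : -1 <= v -> (1 + v) ^+ k <= expR (k%:R * v).
Proof. by move=> v1; rewrite expRM_natl lerXn2r ?nnegrE ?expR_ge0 ?expR_ge1Dx //; lra. Qed.

Lemma ln2_ge_half : 1 / 2 <= ln (2 : R).
Proof.
have : expR (1 / 2 : R) <= (1 - 1 / 2)^-1 by apply: expR_le_inv; lra.
rewrite (_ : (1 - 1 / 2)^-1 = 2 :> R); last by field.
by move=> h; rewrite -[X in X <= _](expRK (1 / 2 : R)) ler_ln ?posrE ?expR_gt0.
Qed.

Lemma ln2_le1 : ln (2 : R) <= 1.
Proof.
have : (2 : R) <= expR 1 by have := expR_ge1Dx (1 : R); lra.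
by move=> h; rewrite -[X in _ <= X](expRK (1 : R)) ler_ln ?posrE ?expR_gt0.
Qed.

(* Markov-type domination of an indicator: if u > r v or v > r u then one of the
   two exponentials has a nonnegative exponent. *)
Lemma bad_le_exp (lam r u v : R) : 0 < lam -> ~~ ((u <= r * v) && (v <= r * u)) ->
  1 <= expR ((u - r * v) * lam) + expR ((v - r * u) * lam).
Proof.
move=> lam0 /nandP[|]; rewrite -ltNge => h.
  have := expR_ge1Dx ((u - r * v) * lam); have := expR_ge0 ((v - r * u) * lam).
  have : 0 <= (u - r * v) * lam by rewrite mulr_ge0 //; lra.
  lra.
have := expR_ge1Dx ((v - r * u) * lam); have := expR_ge0 ((u - r * v) * lam).
have : 0 <= (v - r * u) * lam by rewrite mulr_ge0 //; lra.
lra.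
Qed.

(* Two polynomial inequalities on [0, 1/4] and [1/4, 9/25], by comparing
   successive powers. *)
Lemma poly_nonneg_small s : 0 <= s -> s <= 1 / 4 ->
  0 <= 25/16 - 49/16 * s - 37/8 * s^+2 - 31/16 * s^+3 - 7 * s^+4 + 4 * s^+5.
Proof.
move=> s0 s1.
have s2 : s^+2 <= s / 4 by nra.
have s3 : s^+3 <= s^+2 / 4 by rewrite exprS; nra.
have s4 : s^+4 <= s^+3 / 4 by rewrite (exprS _ 3); nra.
have := exprn_ge0 5 s0; lra.
Qed.

Lemma poly_nonneg_large s : 1 / 4 <= s -> s <= 9 / 25 ->
  0 <= -1/16 + 595/256 * s^+2 - 1535/512 * s^+3 - 33/32 * s^+4
       - 91/32 * s^+5 - 7/2 * s^+6 + 2 * s^+7.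
Proof.
move=> s1 s2; set t := s - 1 / 4.
have -> : s = t + 1 / 4 by rewrite /t; lra.
have t0 : 0 <= t by rewrite /t; lra.
have t1 : t <= 11 / 100 by rewrite /t; lra.
have e2 : t^+2 <= 11/100 * t by nra.
have e3 : t^+3 <= 11/100 * t^+2 by rewrite exprS; nra.
have e4 : t^+4 <= 11/100 * t^+3 by rewrite (exprS _ 3); nra.
have e5 : t^+5 <= 11/100 * t^+4 by rewrite (exprS _ 4); nra.
have e6 : t^+6 <= 11/100 * t^+5 by rewrite (exprS _ 5); nra.
have := exprn_ge0 7 t0; have := exprn_ge0 2 t0; have := exprn_ge0 3 t0.
have := exprn_ge0 4 t0; have := exprn_ge0 5 t0; have := exprn_ge0 6 t0.
rewrite !exprS !expr0 !mulr1 in e2 e3 e4 e5 e6 * => f6 f5 f4 f3 f2 f7.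
nra.
Qed.

Lemma rational_bound s u : 0 < s -> s ^+ 2 <= 1 / 8 -> 0 <= u ->
  s ^+ 2 - 1 / 16 <= u ->
  (1 - s / 2)^-1 + ((1 + (1 + 8 * s) * (s / 2) / 2) ^+ 2)^-1 - 2 <= u - 2 * s ^+ 2.
Proof.
move=> s0 s8 u0 su.
set A := 1 - s / 2; set B := (1 + (1 + 8 * s) * (s / 2) / 2) ^+ 2.
have s925 : s <= 9 / 25 by move: s8; rewrite expr2; nra.
have A0 : 0 < A by rewrite /A; lra.
have B0 : 0 < B by rewrite /B exprn_gt0 //; nra.
suff [T [hT hAB]] : exists T, T <= 2 - 2 * s ^+ 2 + u /\ A + B <= T * (A * B).
  have -> : A^-1 + B^-1 = (A + B) / (A * B) by field; rewrite !gt_eqF.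
  have : (A + B) / (A * B) <= T by rewrite ler_pdivrMr // mulr_gt0.
  lra.
have [s_small|s_large] := lerP s (1 / 4).
  exists (2 - 2 * s ^+ 2); split; first lra.
  have e : (2 - 2 * s ^+ 2) * (A * B) - (A + B) =
     s ^+ 2 * (25/16 - 49/16 * s - 37/8 * s^+2 - 31/16 * s^+3 - 7 * s^+4 + 4 * s^+5).
    by rewrite /A /B; field.
  have := mulr_ge0 (sqr_ge0 s) (poly_nonneg_small _ (ltW s0) s_small); rewrite -e; lra.
exists (2 - s ^+ 2 - 1 / 16); split; first lra.
have e : (2 - s ^+ 2 - 1 / 16) * (A * B) - (A + B) =
  -1/16 + 595/256 * s^+2 - 1535/512 * s^+3 - 33/32 * s^+4 - 91/32 * s^+5
  - 7/2 * s^+6 + 2 * s^+7.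
  by rewrite /A /B; field.
have := poly_nonneg_large _ (ltW s_large) s925; rewrite -e; lra.
Qed.

Lemma exp_pair_bound s u : 0 < s -> s ^+ 2 <= 1 / 8 -> 0 <= u ->
  s ^+ 2 - 1 / 16 <= u ->
  expR (s / 2) + expR (- ((1 + 8 * s + 8 * u) * (s / 2))) - 2 <= u - 2 * s ^+ 2.
Proof.
move=> s0 s8 u0 su.
have s1 : s <= 1 by move: s8; rewrite expr2; nra.
have hx : expR (s / 2) <= (1 - s / 2)^-1 by apply: expR_le_inv; lra.
have hy : expR (- ((1 + 8 * s + 8 * u) * (s / 2))) <=
          ((1 + (1 + 8 * s) * (s / 2) / 2) ^+ 2)^-1.
  have t0 : 0 <= (1 + 8 * s) * (s / 2) by rewrite mulr_ge0 //; lra.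
  apply: le_trans (expRN_le_inv_sq _ t0).
  by rewrite ler_expR lerN2 ler_pM2r; lra.
have := rational_bound _ _ s0 s8 u0 su; lra.
Qed.

Lemma mgf_exp_bound (p w : R) (n : nat) : 0 <= p <= 1 -> -1 <= w <= 0 -> (0 < n)%N ->
  2 * (1 + w) * (1 + p * w) ^+ n.-1 <= 2 * expR (n%:R * p * w).
Proof.
move=> /andP[p0 p1] /andP[w1 w0] n0.
have pw : -1 <= p * w by nra.
have h1 : 1 + w <= expR w := expR_ge1Dx w.
have h2 := pow_le_expR n.-1 _ pw.
rewrite -mulrA ler_pM2l //; apply: le_trans (ler_pM _ _ h1 h2) _.
- lra.
- by rewrite exprn_ge0 //; lra.
have -> : (n%:R : R) = n.-1%:R + 1 by rewrite natr1 prednK.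
rewrite -expRD ler_expR; nra.
Qed.

Lemma moment_le_scaled (p s u r : R) (n : nat) : 0 <= p <= 1 -> (0 < n)%N ->
  0 < s -> 0 < u -> s ^+ 2 <= 1 / 8 -> s ^+ 2 - 1 / 16 <= u -> u <= 2 * s ^+ 2 ->
  u * (p * n%:R) = 1 -> r = 1 + 8 * s + 8 * u ->
  (expR (s / 2) + expR (- (r * (s / 2)))) *
  (1 - p + p * (expR (s / 2) + expR (- (r * (s / 2)))) / 2) ^+ n.-1
  <= 2 * expR (1 / 2 - s ^+ 2 * (p * n%:R)).
Proof.
move=> p01 n0 s0 u0 s8 su us uN hr.
have xy := exp_pair_bound _ _ s0 s8 (ltW u0) su; rewrite -hr in xy.
set x := expR (s / 2) in xy *; set y := expR (- (r * (s / 2))) in xy *.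
have x0 : 0 < x := expR_gt0 _; have y0 : 0 < y := expR_gt0 _.
set w := (x + y) / 2 - 1.
rewrite (_ : x + y = 2 * (1 + w)); last by rewrite /w; field.
rewrite (_ : 1 - p + p * (2 * (1 + w)) / 2 = 1 + p * w); last by field.
have w10 : -1 <= w <= 0 by apply/andP; split; rewrite /w; lra.
apply: le_trans (mgf_exp_bound p w n p01 w10 n0) _.
have N0 : 0 < p * n%:R by move: uN; set N := p * n%:R => uN; nra.
rewrite ler_pM2l // ler_expR (mulrC n%:R p).
have : p * n%:R * w <= p * n%:R * ((u - 2 * s ^+ 2) / 2) by rewrite ler_pM2l // /w; lra.
rewrite (_ : p * n%:R * ((u - 2 * s ^+ 2) / 2) = u * (p * n%:R) / 2 - s ^+ 2 * (p * n%:R)).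
  by rewrite uN; lra.
by field.
Qed.

(* The quantitative heart of the lemma: with N = p n and L = ln(4/delta), the
   parameters s = sqrt(L/N) and u = 1/N satisfy the hypotheses above, and
   2 exp(1/2 - L) <= delta; here r is the exponential of eps. *)
Lemma moment_le_delta (delta p : R) (n : nat) :
  0 < delta <= 1 -> 0 <= p <= 1 -> (0 < n)%N ->
  16 * ln (2 / delta) / n%:R <= p ->
  let N := p * n%:R in let s := Num.sqrt (ln (4 / delta)) / Num.sqrt N in
  let r := 1 + Num.sqrt (64 * ln (4 / delta)) / Num.sqrt N + 8 / N in
  [/\ 0 < r, 0 < s / 2 &
      (expR (s / 2) + expR (- (r * (s / 2)))) *
      (1 - p + p * (expR (s / 2) + expR (- (r * (s / 2)))) / 2) ^+ n.-1 <= delta].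
Proof.
move=> /andP[d0 d1] p01 n0 hp N s r.
set ell := ln (2 / delta); set L := ln (4 / delta).
have sE : s = Num.sqrt L / Num.sqrt N by [].
have rE : r = 1 + Num.sqrt (64 * L) / Num.sqrt N + 8 / N by [].
clearbody s r.
have l2 := ln2_ge_half; have l2' := ln2_le1.
have ell_ge : ln 2 <= ell by rewrite ler_ln ?posrE ?divr_gt0 // ler_pdivlMr //; lra.
have n_gt0 : (0 : R) < n%:R by rewrite ltr0n.
have hN : 16 * ell <= N by rewrite /N -ler_pdivrMr.
have N0 : 0 < N by lra.
have hL : L = ell + ln 2.
  by rewrite -lnM ?posrE ?divr_gt0 //; congr ln; field; rewrite gt_eqF.
have sqL : 0 < Num.sqrt L by rewrite sqrtr_gt0; lra.
have sqN : 0 < Num.sqrt N by rewrite sqrtr_gt0.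
have s0 : 0 < s by rewrite sE divr_gt0.
have sN : s ^+ 2 * N = L.
  by rewrite sE exprMn exprVn !sqr_sqrtr ?mulfVK ?gt_eqF //; lra.
set u := N^-1.
have uN : u * N = 1 by rewrite mulVf ?gt_eqF.
have u0 : 0 < u by rewrite invr_gt0.
have sqrt64 : Num.sqrt (64 * L) = 8 * Num.sqrt L.
  rewrite sqrtrM; last lra.
  by rewrite (_ : 64 = 8 ^+ 2 :> R) ?sqrtr_sqr ?ger0_norm //; lra.
have hr : r = 1 + 8 * s + 8 * u by rewrite rE sqrt64 sE mulrA.
clearbody u.
have s8 : s ^+ 2 <= 1 / 8 by rewrite -(ler_pM2r N0) sN; lra.
have su : s ^+ 2 - 1 / 16 <= u by rewrite -(ler_pM2r N0) mulrBl sN uN; lra.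
have us : u <= 2 * s ^+ 2 by rewrite -(ler_pM2r N0) uN -mulrA sN; lra.
split; [lra | lra |].
apply: le_trans (moment_le_scaled _ _ _ _ _ p01 n0 s0 u0 s8 su us uN hr) _; rewrite -/N sN.
have -> : delta = 2 * expR (- ell).
  by rewrite expRN lnK ?posrE ?divr_gt0 //; field; rewrite gt_eqF.
by rewrite ler_pM2l // ler_expR; lra.
Qed.

End Estimates.

Section Law.
Variables (R : realType) (m : nat) (p : R).
Hypothesis p01 : 0 <= p <= 1.

(* [expect h] is E[h(A, B)] for B = C - A. *)
Definition expect (h : nat -> nat -> R) : R :=
  \sum_(0 <= c < m.+1) \sum_(0 <= a < c.+1) joint m p c a * h a (c - a)%N.

Definition ind (b : bool) : R := if b then 1 else 0.

(* Pr(C = c) / 2^c: the joint law factors through binomial coefficients in a. *)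
Definition cweight (c : nat) : R :=
  ('C(m, c))%:R * p ^+ c * (1 - p) ^+ (m - c) / 2 ^+ c.

Lemma jointE c a : joint m p c a = cweight c * ('C(c, a))%:R.
Proof. by rewrite /joint /cweight mulrAC. Qed.

Lemma cweight_ge0 c : 0 <= cweight c.
Proof.
case/andP: p01 => p0 p1.
by rewrite /cweight divr_ge0 ?exprn_ge0 // !mulr_ge0 ?exprn_ge0 // subr_ge0.
Qed.

Lemma joint_ge0 c a : 0 <= joint m p c a.
Proof. by rewrite jointE mulr_ge0 ?cweight_ge0. Qed.

Lemma expect_le h1 h2 :
  (forall c a, (a <= c <= m)%N -> 0 < joint m p c a -> h1 a (c - a)%N <= h2 a (c - a)%N) ->
  expect h1 <= expect h2.
Proof.
move=> h12; apply: ler_sum_nat => c /andP[_ cm]; apply: ler_sum_nat => a /andP[_ ac].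
move: (joint_ge0 c a); rewrite le0r => /orP[/eqP->|J0]; first by rewrite !mul0r.
by rewrite ler_wpM2l ?joint_ge0 // h12 //; apply/andP.
Qed.

Lemma expectD h1 h2 :
  expect (fun a b => h1 a b + h2 a b) = expect h1 + expect h2.
Proof.
rewrite /expect -big_split; apply: eq_bigr => c _.
by rewrite -big_split; apply: eq_bigr => a _; rewrite mulrDr.
Qed.

Lemma expectB h1 h2 :
  expect (fun a b => h1 a b - h2 a b) = expect h1 - expect h2.
Proof.
rewrite /expect -sumrB; apply: eq_bigr => c _.
by rewrite -sumrB; apply: eq_bigr => a _; rewrite mulrBr.
Qed.

Lemma expectZ k h : expect (fun a b => k * h a b) = k * expect h.
Proof.
rewrite /expect mulr_sumr; apply: eq_bigr => c _.
by rewrite mulr_sumr; apply: eq_bigr => a _; rewrite mulrCA.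
Qed.

(* Generating function of (A, B): both binomial sums collapse. *)
Lemma expect_mgf x y :
  expect (fun a b => x ^+ a * y ^+ b) = (1 - p + p * (x + y) / 2) ^+ m.
Proof.
have inner c : \sum_(0 <= a < c.+1) joint m p c a * (x ^+ a * y ^+ (c - a)) =
               cweight c * (y + x) ^+ c.
  rewrite exprDn big_mkord mulr_sumr; apply: eq_bigr => i _.
  by rewrite jointE -mulr_natr; ring.
rewrite /expect; under eq_bigr => c _ do rewrite inner.
rewrite addrC exprDn big_mkord; apply: eq_bigr => i _.
by rewrite /cweight !exprMn exprVn -[RHS]mulr_natr; ring.
Qed.

Lemma expect1 : expect (fun _ _ => 1) = 1.
Proof.
transitivity (expect (fun a b => 1 ^+ a * 1 ^+ b)).
  by rewrite /expect; apply: eq_bigr => c _; apply: eq_bigr => a _; rewrite !expr1n !mulr1.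
by rewrite expect_mgf (_ : 1 - p + p * (1 + 1) / 2 = 1) ?expr1n //; lra.
Qed.

Lemma PrPE E : PrP m p E = expect (fun a b => ind (E (a.+1, b))).
Proof. by []. Qed.

Lemma eq_PrP E F : E =1 F -> PrP m p E = PrP m p F.
Proof. by move=> EF; apply: eq_bigr => c _; apply: eq_bigr => a _; rewrite EF. Qed.

(* Given C, A and B = C - A are exchangeable; hence Q is P with coordinates swapped. *)
Lemma joint_sym c a : (a <= c)%N -> joint m p c (c - a) = joint m p c a.
Proof. by move=> ac; rewrite !jointE bin_sub. Qed.

Lemma PrQ_swap E : PrQ m p E = PrP m p (fun z => E (z.2, z.1)).
Proof.
apply: eq_bigr => c _; rewrite big_nat_rev; apply: eq_big_nat => a /andP[_ ac] /=.
by rewrite add0n subSS subKn // joint_sym.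
Qed.

Lemma pmfQ_swap z : pmfQ m p z = pmfP m p (z.2, z.1).
Proof.
rewrite /pmfQ PrQ_swap; apply: eq_PrP => -[i j].
by case: z => i' j'; rewrite /pred1 /= !xpair_eqE andbC.
Qed.

Lemma pmfP_swap z : pmfP m p z = pmfQ m p (z.2, z.1).
Proof. by rewrite pmfQ_swap; case: z. Qed.

Lemma triangle_sum_pred1 (F : nat -> nat -> R) c0 a0 :
  (a0 <= c0 <= m)%N ->
  \sum_(0 <= c < m.+1) \sum_(0 <= a < c.+1) F c a * ind ((c == c0) && (a == a0))
  = F c0 a0.
Proof.
case/andP=> ac cm.
transitivity (\sum_(0 <= c < m.+1) (if c == c0 then F c a0 else 0)).
  apply: eq_bigr => c _; case: eqP => [->|_].
    transitivity (\sum_(0 <= a < c0.+1 | a == a0) F c0 a).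
      by rewrite [RHS]big_mkcond; apply: eq_bigr => a _; case: eqP; rewrite /ind ?mulr1 ?mulr0.
    by rewrite big_nat1_eq ltnS ac.
  by rewrite big1 // => a _; rewrite /ind mulr0.
by rewrite -big_mkcond big_nat1_eq ltnS cm.
Qed.

Lemma pmfP_pt k c : (k < c <= m)%N -> pmfP m p (k.+1, (c - k)%N) = joint m p c k.
Proof.
move=> kcm; rewrite -(triangle_sum_pred1 (joint m p)); last lia.
apply: eq_bigr => c' _; apply: eq_big_nat => a /andP[_ ac'].
congr (_ * ind _); rewrite /=.
by apply/andP/andP => -[/eqP ? /eqP ?]; split; apply/eqP; lia.
Qed.

Lemma pmfQ_pt k c : (k < c <= m)%N -> pmfQ m p (k.+1, (c - k)%N) = joint m p c k.+1.
Proof.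
move=> kcm; rewrite pmfQ_swap /= -joint_sym; last lia.
have -> : ((c - k)%N, k.+1) = ((c - k.+1).+1, (c - (c - k.+1))%N) by congr pair; lia.
by apply: pmfP_pt; lia.
Qed.

Lemma pmfP_0 j : pmfP m p (0%N, j) = 0.
Proof. by rewrite /pmfP /PrP big1 // => c _; rewrite big1 // => a _; rewrite mulr0. Qed.

Lemma pmfQ_0 i : pmfQ m p (i, 0%N) = 0.
Proof. by rewrite pmfQ_swap pmfP_0. Qed.

Lemma joint_ratio c k : (k < c)%N ->
  joint m p c k * (c - k)%:R = joint m p c k.+1 * k.+1%:R.
Proof.
move=> kc; rewrite !jointE -!mulrA -!natrM.
by rewrite [('C(c, k) * _)%N]mulnC -mul_bin_left mulnC.
Qed.

Lemma good_eventE (r : R) z : 0 < r ->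
  good_event m p (ln r) z =
  [&& 0 < pmfP m p z, 0 < pmfQ m p z,
      pmfP m p z <= r * pmfQ m p z & pmfQ m p z <= r * pmfP m p z].
Proof.
move=> r0; rewrite /good_event.
have [P0|] := ltP 0 (pmfP m p z); have [Q0|] := ltP 0 (pmfQ m p z) => //=.
by rewrite ln_ratio_bounds.
Qed.

Lemma good_event_swap (r : R) z : 0 < r ->
  good_event m p (ln r) (z.2, z.1) = good_event m p (ln r) z.
Proof.
move=> r0; case: z => i j; rewrite !good_eventE // (pmfP_swap (j, i)) (pmfQ_swap (j, i)) /=.
by apply/and4P/and4P => -[? ? ? ?]; split.
Qed.

Lemma PrQ_good (r : R) : 0 < r ->
  PrQ m p (good_event m p (ln r)) = PrP m p (good_event m p (ln r)).
Proof. by move=> r0; rewrite PrQ_swap; apply: eq_PrP => z; rewrite good_event_swap. Qed.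

Lemma good_point (r : R) a c : (a <= c <= m)%N -> 0 < r -> 0 < joint m p c a ->
  a.+1%:R <= r * (c - a)%:R -> (c - a)%:R <= r * a.+1%:R ->
  good_event m p (ln r) (a.+1, (c - a)%N).
Proof.
move=> /andP[ac cm] r0 J0 h1 h2.
have lt_ac : (a < c)%N.
  rewrite ltn_neqAle ac andbT; apply: contraTneq h1 => ->.
  by rewrite subnn mulr0 -ltNge ltr0Sn.
have ca0 : (0 : R) < (c - a)%:R by rewrite ltr0n subn_gt0.
have a0 : (0 : R) < a.+1%:R by rewrite ltr0Sn.
have W0 : 0 < cweight c.
  rewrite lt0r cweight_ge0 andbT; apply: contraTneq J0 => W0.
  by rewrite jointE W0 mul0r ltxx.
have J1 : 0 < joint m p c a.+1 by rewrite jointE mulr_gt0 // ltr0n bin_gt0.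
rewrite good_eventE // pmfP_pt ?lt_ac // pmfQ_pt ?lt_ac // J0 J1 /=.
move: (@joint_ratio c a lt_ac) J0 J1.
move: (joint m p c a) (joint m p c a.+1) => x y ratio x0 y0.
by apply/andP; split; nra.
Qed.

Lemma PrP_le_on_good (r : R) (S : pred (nat * nat)) : 0 < r ->
  (forall z, S z -> good_event m p (ln r) z) -> PrP m p S <= r * PrQ m p S.
Proof.
move=> r0 SG.
have notS_P0 j : S (0%N, j) = false.
  by apply/negbTE/negP => /SG; rewrite good_eventE // pmfP_0 ltxx.
have notS_Q0 i : S (i, 0%N) = false.
  by apply/negbTE/negP => /SG; rewrite good_eventE // pmfQ_0 ltxx andbF.
rewrite /PrP /PrQ mulr_sumr; apply: ler_sum_nat => c /andP[_ cm].
rewrite big_nat_recr //= subnn notS_Q0 mulr0 addr0.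
rewrite big_nat_recl //= notS_P0 mulr0 add0r mulr_sumr.
apply: ler_sum_nat => a /andP[_ ac]; rewrite (_ : (c - a.+1).+1 = c - a)%N; last lia.
case Sa: (S _); last by rewrite !mulr0.
have acm : (a < c <= m)%N by lia.
have := SG _ Sa; rewrite good_eventE // pmfP_pt // pmfQ_pt //.
by case/and4P=> _ _ + _; rewrite !mulr1.
Qed.

Lemma PrP_sub (E F : pred (nat * nat)) :
  (forall z, E z -> F z) -> PrP m p E <= PrP m p F.
Proof.
move=> EF; rewrite !PrPE; apply: expect_le => c a _ _; rewrite /ind.
by case Ez: (E _); [rewrite EF | case: (F _)].
Qed.

Lemma PrP_compl (G : pred (nat * nat)) :
  PrP m p (fun z => ~~ G z) = 1 - PrP m p G.
Proof.
rewrite !PrPE -expect1 -expectB /expect; apply: eq_bigr => c _; apply: eq_bigr => a _.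
by rewrite /ind; case: (G _); rewrite /= ?subrr ?subr0.
Qed.

Lemma PrP_split (E G : pred (nat * nat)) :
  PrP m p E <= PrP m p (fun z => E z && G z) + PrP m p (fun z => ~~ G z).
Proof.
rewrite !PrPE -expectD; apply: expect_le => c a _ _; rewrite /ind.
by case: (E _); case: (G _) => /=; lra.
Qed.

(* If the good event has P-probability at least 1 - delta, P and Q are
   (ln r, delta)-indistinguishable; the lower bound follows from the upper
   one applied to the swapped event. *)
Lemma indist_of_good (r delta : R) : 0 < r ->
  1 - delta <= PrP m p (good_event m p (ln r)) -> indist m p (ln r) delta.
Proof.
move=> r0 goodP.
have upper E : PrP m p E <= r * PrQ m p E + delta.
  set G := good_event m p (ln r).
  have EG : PrP m p (fun z => E z && G z) <= r * PrQ m p E.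
    apply: le_trans (@PrP_le_on_good r (fun z => E z && G z) r0 _) _.
      by move=> z /andP[].
    by rewrite ler_pM2l // !PrQ_swap; apply: PrP_sub => z /andP[].
  have := PrP_split E G; rewrite PrP_compl; lra.
move=> E; rewrite expRN lnK ?posrE //; split; last exact: upper.
have := upper (fun z => E (z.2, z.1)); rewrite -PrQ_swap.
rewrite (_ : PrQ m p (fun z => E (z.2, z.1)) = PrP m p E) => [h|].
  by rewrite ler_pdivrMl //; lra.
by rewrite PrQ_swap; apply: eq_PrP => -[].
Qed.

(* Chernoff bound for the good event: off it, one of A + 1, B exceeds r times
   the other, so its indicator is dominated by x^(A+1) y^B + x^B y^(A+1) with
   x = exp(lam), y = exp(-r lam), whose mean is an explicit generating function. *)
Lemma PrP_good_ge (r lam : R) : 0 < r -> 0 < lam ->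
  1 - (expR lam + expR (- (r * lam))) *
      (1 - p + p * (expR lam + expR (- (r * lam))) / 2) ^+ m
  <= PrP m p (good_event m p (ln r)).
Proof.
move=> r0 lam0; set x := expR lam; set y := expR (- (r * lam)).
have xy i j : x ^+ i * y ^+ j = expR ((i%:R - r * j%:R) * lam).
  by rewrite -!expRM_natl -expRD; congr expR; ring.
set f := fun a b : nat => x ^+ a.+1 * y ^+ b + x ^+ b * y ^+ a.+1.
have mgf : expect f = (x + y) * (1 - p + p * (x + y) / 2) ^+ m.
  transitivity (expect (fun a b => x * (x ^+ a * y ^+ b) + y * (y ^+ a * x ^+ b))).
    by apply: eq_bigr => c _; apply: eq_bigr => a _; rewrite /f !exprS; congr (_ * _); ring.
  by rewrite expectD !expectZ !expect_mgf [y + x]addrC mulrDl.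
rewrite -mgf -expect1 -expectB PrPE; apply: expect_le => c a acm J0.
have f0 : 0 <= f a (c - a)%N by rewrite /f !xy addr_ge0 ?expR_ge0.
rewrite /ind; case G: (good_event _ _ _ _); first lra.
suff : 1 <= f a (c - a)%N by lra.
rewrite /f !xy; apply: bad_le_exp => //; apply: contraFN G => /andP[h1 h2].
exact: good_point.
Qed.

End Law.

Theorem lemmaA1 (R : realType) (delta p : R) (n : nat) :
  0 < delta <= 1 -> 0 <= p <= 1 -> (0 < n)%N ->
  16 * ln (2 / delta) / n%:R <= p ->
  let eps := ln (1 + Num.sqrt (64 * ln (4 / delta)) / Num.sqrt (p * n%:R)
                   + 8 / (p * n%:R)) in
  1 - delta <= PrP n.-1 p (good_event n.-1 p eps) /\
  1 - delta <= PrQ n.-1 p (good_event n.-1 p eps) /\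
  indist n.-1 p eps delta.
Proof.
move=> hd hp hn hb eps.
have [r0 lam0 moment] := moment_le_delta _ _ _ _ hd hp hn hb.
have good : 1 - delta <= PrP n.-1 p (good_event n.-1 p eps).
  by apply: le_trans (PrP_good_ge _ _ _ hp _ _ r0 lam0); lra.
split=> //; split; first by rewrite PrQ_good.
exact: indist_of_good.
Qed.
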